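(* Let $\mathcal{H}$ be a complex Hilbert space and $B \in \mathcal{B}(\mathcal{H})$ invertible. The following are equivalent: (a) $B = MN - NM$ for some $M, N \in \mathcal{B}(\mathcal{H})$ with $M^2 = 0 = N^2$; (b) there exist a Hilbert space $\mathcal{K}$ and an invertible operator $A_0 \in \mathcal{B}(\mathcal{K})$ such that $B$ is similar to $A_0 \oplus (-A_0)$ acting on $\mathcal{K} \oplus \mathcal{K}$ (i.e. $S^{-1} B S = A_0 \oplus (-A_0)$ for some invertible $S : \mathcal{K} \oplus \mathcal{K} \to \mathcal{H}$). *)

From HB Require Import structures.
From mathcomp Require Import all_boot all_order all_algebra.
From mathcomp Require Import complex.
From mathcomp Require Import reals.
Set Implicit Arguments. Unset Strict Implicit. Unset Printing Implicit Defensive.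
Import Order.TTheory GRing.Theory Num.Theory.
Local Open Scope ring_scope.

Section Hilbert.
Variable R : realType.
Local Notation C := R[i].

Definition is_inner_product (V : lmodType C) (ip : V -> V -> C) : Prop :=
  [/\ forall (a : C) (x y z : V), ip (a *: x + y) z = a * ip x z + ip y z,
      forall x y : V, ip y x = (ip x y)^*,
      forall x : V, 0 <= ip x x
    & forall x : V, ip x x = 0 -> x = 0].

(* the induced norm (a nonnegative real, viewed inside C) *)
Definition ipnorm (V : lmodType C) (ip : V -> V -> C) (x : V) : C := sqrtC (ip x x).

Definition ip_complete (V : lmodType C) (ip : V -> V -> C) : Prop :=
  forall u : nat -> V,
    (forall e : C, 0 < e -> exists N, forall m n, (N <= m)%N -> (N <= n)%N ->
        ipnorm ip (u m - u n) < e) ->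
    exists l : V, forall e : C, 0 < e -> exists N, forall n, (N <= n)%N ->
        ipnorm ip (u n - l) < e.

Definition is_Hilbert (V : lmodType C) (ip : V -> V -> C) : Prop :=
  is_inner_product ip /\ ip_complete ip.

Definition bounded_op (V W : lmodType C) (ipV : V -> V -> C) (ipW : W -> W -> C)
    (T : V -> W) : Prop :=
  [/\ forall x y : V, T (x + y) = T x + T y,
      forall (a : C) (x : V), T (a *: x) = a *: T x
    & exists c : C, forall x : V, ipnorm ipW (T x) <= c * ipnorm ipV x].

Definition bounded_inverse (V W : lmodType C) (ipV : V -> V -> C) (ipW : W -> W -> C)
    (T : V -> W) (Ti : W -> V) : Prop :=
  [/\ bounded_op ipV ipW T, bounded_op ipW ipV Ti,
      forall x : V, Ti (T x) = x & forall y : W, T (Ti y) = y].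

Definition invertible_op (V W : lmodType C) (ipV : V -> V -> C) (ipW : W -> W -> C)
    (T : V -> W) : Prop :=
  exists Ti : W -> V, bounded_inverse ipV ipW T Ti.

(* orthogonal direct sum K (+) K, carried by the product module K * K *)
Definition ip_sum (K : lmodType C) (ip : K -> K -> C) (p q : (K * K)%type) : C :=
  ip p.1 q.1 + ip p.2 q.2.

Definition dsum_neg (K : lmodType C) (A0 : K -> K) (p : (K * K)%type) : (K * K)%type :=
  (A0 p.1, - A0 p.2).

End Hilbert.

From HB Require Import structures.
From mathcomp Require Import all_boot all_order all_algebra.
From mathcomp Require Import complex reals ring.
Set Implicit Arguments. Unset Strict Implicit. Unset Printing Implicit Defensive.
Import Order.TTheory GRing.Theory Num.Theory.
Local Open Scope ring_scope.

(* (a) -> (b): since M^2 = N^2 = 0, B = MN - NM anticommutes with M and N, so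
   E = M N B^-1 is a bounded idempotent commuting with B, with E M = M and
   E N = 0. Its range K is a closed B-invariant subspace, and (x, y) |-> x - N y
   is an isomorphism K (+) K -> H, with inverse h |-> (E h, M B^-1 h), which
   conjugates B into B|K (+) (-B|K).
   (b) -> (a): on K (+) K, A0 (+) (-A0) = M0 N0 - N0 M0 for M0 (x, y) = (A0 y, 0)
   and N0 (x, y) = (0, x), and such a decomposition is transported along any
   similarity. *)

Section FixedSpace.
Variables (F : pzRingType) (V : lmodType F) (E : {linear V -> V}).

Definition fixed_space : {pred V} := [pred x | E x == x].

Fact fixed_space_submod_closed : submod_closed fixed_space.
Proof.
split=> [|a x y]; first by rewrite inE linear0.
by rewrite !inE linearP => /eqP-> /eqP->.
Qed.

HB.instance Definition _ := GRing.isSubmodClosed.Build F V fixed_space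
  (GRing.submod_closed_semi fixed_space_submod_closed).

Record fixed_vec := FixedVec { fixed_val : V; _ : fixed_val \in fixed_space }.

HB.instance Definition _ := [isSub for fixed_val].
HB.instance Definition _ := [Choice of fixed_vec by <:].
HB.instance Definition _ := [SubChoice_isSubLmodule of fixed_vec by <:].

Lemma fixed_valP (x : fixed_vec) : E (fixed_val x) = fixed_val x.
Proof. by apply/eqP; case: x. Qed.

Definition fixed_corestrict (W : Type) (T : W -> V) (ET : forall w, E (T w) = T w)
  (w : W) : fixed_vec := FixedVec (introT eqP (ET w)).

End FixedSpace.

Arguments fixed_val {F V E}.

Section InnerProduct.
Variable R : realType.
Local Notation C := R[i].
Variables (V : lmodType C) (ip : V -> V -> C).
Hypothesis ipP : is_inner_product ip.

Lemma ip_ge0 x : 0 <= ip x x.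
Proof. by case: ipP. Qed.

Lemma ipDl x y z : ip (x + y) z = ip x z + ip y z.
Proof. by case: ipP => ipZD _ _ _; rewrite -{1}[x]scale1r ipZD mul1r. Qed.

Lemma ipBl x y z : ip (x - y) z = ip x z - ip y z.
Proof. by case: ipP => ipZD _ _ _; rewrite addrC -scaleN1r ipZD mulN1r addrC. Qed.

Lemma ip0l z : ip 0 z = 0.
Proof. by have := ipBl 0 0 z; rewrite !subrr. Qed.

Lemma ipDr x y z : ip z (x + y) = ip z x + ip z y.
Proof. by case: ipP => _ ipC _ _; rewrite ipC ipDl rmorphD /= -!ipC. Qed.

Lemma ipBr x y z : ip z (x - y) = ip z x - ip z y.
Proof. by case: ipP => _ ipC _ _; rewrite ipC ipBl rmorphB /= -!ipC. Qed.

Lemma ip_subv_le x y : ip (x - y) (x - y) <= 2 * (ip x x + ip y y).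
Proof.
have <- : ip (x - y) (x - y) + ip (x + y) (x + y) = 2 * (ip x x + ip y y).
  by rewrite !(ipDl, ipBl, ipDr, ipBr); ring.
by rewrite lerDl ip_ge0.
Qed.

Lemma ip_sum_inner_product : is_inner_product (ip_sum ip).
Proof.
case: ipP => ipZD ipC ip_ge0 ip_eq0; split.
- by move=> a p q r; rewrite /ip_sum /= !ipZD mulrDr addrACA.
- by move=> p q; rewrite /ip_sum rmorphD /= -!ipC.
- by move=> p; rewrite addr_ge0.
move=> [x y] /eqP; rewrite /ip_sum /= paddr_eq0 //.
by case/andP=> /eqP/ip_eq0-> /eqP/ip_eq0->.
Qed.

End InnerProduct.

Section BoundedOperators.
Variable R : realType.
Local Notation C := R[i].

(* Squared norms avoid square roots, and bounds on sums then need only the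
   parallelogram law instead of the triangle inequality. *)
Definition sq_bounded (V W : lmodType C) (ipV : V -> V -> C) (ipW : W -> W -> C)
    (f : V -> W) :=
  exists2 k : C, 0 <= k & forall x, ipW (f x) (f x) <= k * ipV x x.

Section Characterization.
Variables (V W : lmodType C) (ipV : V -> V -> C) (ipW : W -> W -> C).
Hypotheses (ipV_P : is_inner_product ipV) (ipW_P : is_inner_product ipW).

Lemma sq_bounded_ipnorm (f : V -> W) : sq_bounded ipV ipW f ->
  exists2 c : C, 0 < c & forall x, ipnorm ipW (f x) <= c * ipnorm ipV x.
Proof.
case=> k k_ge0 fk; exists (sqrtC k + 1) => [|x].
  by apply: ltr_wpDl; rewrite ?sqrtC_ge0.
apply: (le_trans (y := sqrtC k * ipnorm ipV x)).
  by rewrite /ipnorm -sqrtCM ?nnegrE ?ip_ge0 // ler_sqrtC ?nnegrE ?mulr_ge0 ?ip_ge0.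
by rewrite ler_wpM2r ?sqrtC_ge0 ?ip_ge0 // lerDl.
Qed.

Lemma ipnorm_sq_bounded (f : V -> W) (c : C) :
  (forall x, ipnorm ipW (f x) <= c * ipnorm ipV x) -> sq_bounded ipV ipW f.
Proof.
move=> fc; exists (`|c| ^+ 2) => [|x]; first exact: exprn_ge0.
have nx : 0 <= ipnorm ipV x by rewrite sqrtC_ge0 ip_ge0.
have nfx : 0 <= ipnorm ipW (f x) by rewrite sqrtC_ge0 ip_ge0.
have cx : c * ipnorm ipV x = `|c| * ipnorm ipV x.
  by rewrite -[LHS]ger0_norm ?normrM ?(ger0_norm nx) //; exact: le_trans nfx (fc x).
suff : ipnorm ipW (f x) ^+ 2 <= (`|c| * ipnorm ipV x) ^+ 2 by rewrite exprMn !sqrtCK.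
by rewrite ler_pXn2r ?nnegrE ?mulr_ge0 // -cx.
Qed.

Lemma bounded_opP (f : V -> W) : bounded_op ipV ipW f <->
  [/\ {morph f : x y / x + y}, forall a, {morph f : x / a *: x} & sq_bounded ipV ipW f].
Proof.
split=> [[fD fZ [c fc]] | [fD fZ /sq_bounded_ipnorm[c _ fc]]]; split=> //.
  exact: ipnorm_sq_bounded fc.
by exists c.
Qed.

Lemma bounded_op_linear (f : V -> W) : bounded_op ipV ipW f -> linear f.
Proof. by case=> fD fZ _ a x y; rewrite fD fZ. Qed.

Definition bounded_linear (f : V -> W) (f_bd : bounded_op ipV ipW f) : {linear V -> W} :=
  HB.pack f (GRing.isLinear.Build C V W *:%R f (bounded_op_linear f_bd)).

End Characterization.

Variables (U V W K : lmodType C).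
Variables (ipU : U -> U -> C) (ipV : V -> V -> C) (ipW : W -> W -> C) (ipK : K -> K -> C).
Hypotheses (ipU_P : is_inner_product ipU) (ipV_P : is_inner_product ipV).
Hypotheses (ipW_P : is_inner_product ipW) (ipK_P : is_inner_product ipK).

Lemma bounded_op_comp (g : U -> V) (f : V -> W) :
  bounded_op ipU ipV g -> bounded_op ipV ipW f -> bounded_op ipU ipW (f \o g).
Proof.
move=> /(bounded_opP ipU_P ipV_P)[gD gZ [kg kg_ge0 gk]].
move=> /(bounded_opP ipV_P ipW_P)[fD fZ [kf kf_ge0 fk]].
apply/(bounded_opP ipU_P ipW_P); split=> [x y|a x|] /=; rewrite ?gD ?fD ?gZ ?fZ //.
exists (kf * kg) => [|x]; first exact: mulr_ge0.
by rewrite -mulrA; apply: le_trans (fk _) (ler_wpM2l kf_ge0 (gk x)).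
Qed.

Lemma bounded_op_sub (f g : V -> W) : bounded_op ipV ipW f -> bounded_op ipV ipW g ->
  bounded_op ipV ipW (fun x => f x - g x).
Proof.
move=> /(bounded_opP ipV_P ipW_P)[fD fZ [kf kf_ge0 fk]].
move=> /(bounded_opP ipV_P ipW_P)[gD gZ [kg kg_ge0 gk]].
apply/(bounded_opP ipV_P ipW_P); split=> [x y|a x|].
- by rewrite fD gD opprD addrACA.
- by rewrite fZ gZ scalerBr.
exists (2 * (kf + kg)) => [|x]; first by rewrite mulr_ge0 ?addr_ge0.
apply: le_trans (ip_subv_le ipW_P _ _) _.
by rewrite -mulrA ler_wpM2l // mulrDl lerD.
Qed.

Lemma bounded_op0 : bounded_op ipV ipW (fun _ => 0).
Proof.
apply/(bounded_opP ipV_P ipW_P); split=> [x y|a x|]; rewrite ?addr0 ?scaler0 //.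
by exists 0 => // x; rewrite ip0l // mul0r.
Qed.

Lemma bounded_op_pair (f g : V -> K) : bounded_op ipV ipK f -> bounded_op ipV ipK g ->
  bounded_op ipV (ip_sum ipK) (fun x => (f x, g x)).
Proof.
move=> /(bounded_opP ipV_P ipK_P)[fD fZ [kf kf_ge0 fk]].
move=> /(bounded_opP ipV_P ipK_P)[gD gZ [kg kg_ge0 gk]].
apply/(bounded_opP ipV_P (ip_sum_inner_product ipK_P)).
split=> [x y|a x|]; rewrite ?fD ?gD ?fZ ?gZ //.
exists (kf + kg) => [|x]; first exact: addr_ge0.
by rewrite /ip_sum /= mulrDl lerD.
Qed.

Lemma bounded_op_fst : bounded_op (ip_sum ipK) ipK fst.
Proof.
apply/(bounded_opP (ip_sum_inner_product ipK_P) ipK_P); split=> [p q|a p|] //.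
by exists 1 => // p; rewrite mul1r /ip_sum lerDl ip_ge0.
Qed.

Lemma bounded_op_snd : bounded_op (ip_sum ipK) ipK snd.
Proof.
apply/(bounded_opP (ip_sum_inner_product ipK_P) ipK_P); split=> [p q|a p|] //.
by exists 1 => // p; rewrite mul1r /ip_sum lerDr ip_ge0.
Qed.

End BoundedOperators.

Section FixedSubspace.
Variable R : realType.
Local Notation C := R[i].
Variables (V : lmodType C) (ip : V -> V -> C) (E : {linear V -> V}).
Hypothesis ipP : is_inner_product ip.

Definition fixed_ip (x y : fixed_vec E) : C := ip (fixed_val x) (fixed_val y).

Lemma fixed_ip_inner_product : is_inner_product fixed_ip.
Proof.
case: ipP => ipZD ipC ip_ge0 ip_eq0; split=> [a x y z|x y|x|x /ip_eq0 x0].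
- exact: ipZD.
- exact: ipC.
- exact: ip_ge0.
- exact: val_inj.
Qed.

Lemma bounded_op_fixed_val : bounded_op fixed_ip ip (@fixed_val _ _ E).
Proof.
apply/(bounded_opP fixed_ip_inner_product ipP); split=> [x y|a x|] //.
by exists 1 => // x; rewrite mul1r.
Qed.

Lemma bounded_op_fixed_corestrict (W : lmodType C) (ipW : W -> W -> C) (T : W -> V)
    (ET : forall w, E (T w) = T w) :
  is_inner_product ipW -> bounded_op ipW ip T ->
  bounded_op ipW fixed_ip (fixed_corestrict ET).
Proof.
move=> ipW_P /(bounded_opP ipW_P ipP)[TD TZ Tk].
apply/(bounded_opP ipW_P fixed_ip_inner_product).
by split=> [x y|a x|//]; apply: val_inj; [exact: TD | exact: TZ].
Qed.

Lemma fixed_ip_complete : ip_complete ip -> bounded_op ip ip E ->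
  (forall x, E (E x) = E x) -> ip_complete fixed_ip.
Proof.
move=> ip_cplt /(bounded_opP ipP ipP)[_ _ /(sq_bounded_ipnorm ipP ipP)[c c_gt0 Ec]].
move=> EE u u_Cauchy; have [l ul] := ip_cplt (fixed_val \o u) u_Cauchy.
exists (fixed_corestrict EE l) => e e_gt0.
have [n0 hn0] := ul (e / c) (divr_gt0 e_gt0 c_gt0).
exists n0 => n le_n0n; change (ipnorm ip (fixed_val (u n) - E l) < e).
rewrite -[fixed_val (u n)]fixed_valP -linearB.
by apply: le_lt_trans (Ec _) _; rewrite -ltr_pdivlMl // mulrC; exact: hn0.
Qed.

End FixedSubspace.

Section SquareZeroCommutators.
Variable R : realType.
Local Notation C := R[i].

Definition square_zero_commutator (V : lmodType C) (ip : V -> V -> C) (B : V -> V) :=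
  exists M N : V -> V,
    [/\ bounded_op ip ip M, bounded_op ip ip N,
        (forall x, M (M x) = 0), (forall x, N (N x) = 0)
      & forall x, B x = M (N x) - N (M x)].

Definition similar_dsum_neg (V : lmodType C) (ip : V -> V -> C) (B : V -> V) :=
  exists (K : lmodType C) (ipK : K -> K -> C) (A0 : K -> K),
    [/\ is_Hilbert ipK, invertible_op ipK ipK A0
      & exists (S : (K * K)%type -> V) (Si : V -> (K * K)%type),
          bounded_inverse (ip_sum ipK) ip S Si /\
          forall p, Si (B (S p)) = dsum_neg A0 p].

Lemma square_zero_commutator_similar (V W : lmodType C)
    (ipV : V -> V -> C) (ipW : W -> W -> C)
    (S : {linear W -> V}) (Si : {linear V -> W}) (B : V -> V) (B' : W -> W) :
  is_inner_product ipV -> is_inner_product ipW ->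
  bounded_inverse ipW ipV S Si -> (forall w, Si (B (S w)) = B' w) ->
  square_zero_commutator ipW B' -> square_zero_commutator ipV B.
Proof.
move=> ipV_P ipW_P [S_bd Si_bd SiK SK] SiBS [M [N [M_bd N_bd MM NN B'E]]].
have conj_bd T : bounded_op ipW ipW T -> bounded_op ipV ipV (S \o T \o Si).
  move=> T_bd; have ST_bd := bounded_op_comp ipW_P ipW_P ipV_P T_bd S_bd.
  exact (bounded_op_comp ipV_P ipW_P ipV_P Si_bd ST_bd).
exists (S \o M \o Si), (S \o N \o Si); split; try exact: conj_bd.
- by move=> x /=; rewrite SiK MM linear0.
- by move=> x /=; rewrite SiK NN linear0.
by move=> x /=; rewrite !SiK -linearB -B'E -SiBS !SK.
Qed.

Lemma dsum_neg_square_zero_commutator (K : lmodType C) (ipK : K -> K -> C)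
    (A0 : {linear K -> K}) :
  is_inner_product ipK -> bounded_op ipK ipK A0 ->
  square_zero_commutator (ip_sum ipK) (dsum_neg A0).
Proof.
move=> ipK_P A0_bd; have ipKK_P := ip_sum_inner_product ipK_P.
exists (fun p => (A0 p.2, 0)), (fun p => (0, p.1)); split.
- have A0snd_bd := bounded_op_comp ipKK_P ipK_P ipK_P (bounded_op_snd ipK_P) A0_bd.
  exact (bounded_op_pair ipKK_P ipK_P A0snd_bd (bounded_op0 ipKK_P ipK_P)).
- have zero_bd := bounded_op0 ipKK_P ipK_P.
  exact (bounded_op_pair ipKK_P ipK_P zero_bd (bounded_op_fst ipK_P)).
- by move=> p /=; rewrite linear0.
- by [].
by move=> [x y]; congr pair; rewrite /= ?subr0 ?sub0r.
Qed.

End SquareZeroCommutators.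

Section SquareZeroCommutatorDecomposition.
Variable R : realType.
Local Notation C := R[i].
Variables (H : lmodType C) (ipH : H -> H -> C) (M N B Bi : {linear H -> H}).
Hypothesis H_Hilbert : is_Hilbert ipH.
Hypotheses (M_bd : bounded_op ipH ipH M) (N_bd : bounded_op ipH ipH N).
Hypotheses (B_bd : bounded_op ipH ipH B) (Bi_bd : bounded_op ipH ipH Bi).
Hypotheses (BiK : cancel B Bi) (BK : cancel Bi B).
Hypotheses (MM : forall x, M (M x) = 0) (NN : forall x, N (N x) = 0).
Hypothesis BE : forall x, B x = M (N x) - N (M x).

Let ipH_P : is_inner_product ipH := H_Hilbert.1.

Lemma MNM x : M (N (M x)) = - M (B x).
Proof. by rewrite BE linearB MM sub0r opprK. Qed.

Lemma BM x : B (M x) = - M (B x).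
Proof. by rewrite -MNM BE MM linear0 subr0. Qed.

Lemma BN x : B (N x) = - N (B x).
Proof. by rewrite !BE NN linear0 sub0r linearB NN subr0. Qed.

Lemma BiM x : Bi (M x) = - M (Bi x).
Proof. by apply: (can_inj BiK); rewrite BK linearN BM opprK BK. Qed.

Lemma BiN x : Bi (N x) = - N (Bi x).
Proof. by apply: (can_inj BiK); rewrite BK linearN BN opprK BK. Qed.

(* The idempotent onto the range of M along the range of N. *)
Definition projM : {linear H -> H} := M \o N \o Bi.

Lemma projM_M x : projM (M x) = M x.
Proof. by rewrite /projM /= BiM !linearN MNM opprK BK. Qed.

Lemma projM_N x : projM (N x) = 0.
Proof. by rewrite /projM /= BiN !linearN NN linear0 oppr0. Qed.

Lemma projM_B x : projM (B x) = B (projM x).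
Proof. by rewrite /projM /= BiK BM BN linearN opprK BK. Qed.

Lemma projM_Bi x : projM (Bi x) = Bi (projM x).
Proof. by rewrite -{2}[x]BK projM_B BiK. Qed.

Lemma projM_id x : projM (projM x) = projM x.
Proof. exact: projM_M. Qed.

Lemma bounded_op_projM : bounded_op ipH ipH projM.
Proof.
have MN_bd := bounded_op_comp ipH_P ipH_P ipH_P N_bd M_bd.
exact (bounded_op_comp ipH_P ipH_P ipH_P Bi_bd MN_bd).
Qed.

Local Notation K := (fixed_vec projM).
Local Notation ipK := (fixed_ip ipH (E := projM)).

Lemma M_fixed (x : K) : M (fixed_val x) = 0.
Proof. by rewrite -fixed_valP; exact: MM. Qed.

Lemma MBi_fixed (x : K) : M (Bi (fixed_val x)) = 0.
Proof. by rewrite -fixed_valP -projM_Bi; exact: MM. Qed.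

Lemma MN_fixed (x : K) : M (N (fixed_val x)) = B (fixed_val x).
Proof. by rewrite -{2}fixed_valP -projM_B /projM /= BiK. Qed.

Lemma B_fixed (x : K) : projM (B (fixed_val x)) = B (fixed_val x).
Proof. by rewrite projM_B fixed_valP. Qed.

Lemma Bi_fixed (x : K) : projM (Bi (fixed_val x)) = Bi (fixed_val x).
Proof. by rewrite projM_Bi fixed_valP. Qed.

Definition restrB : K -> K := fixed_corestrict B_fixed.
Definition restrBi : K -> K := fixed_corestrict Bi_fixed.

Definition from_dsum (p : K * K) : H := fixed_val p.1 - N (fixed_val p.2).

Definition to_dsum (h : H) : K * K :=
  (fixed_corestrict projM_id h, fixed_corestrict (fun y => projM_M (Bi y)) h).

Lemma projM_from_dsum p : projM (from_dsum p) = fixed_val p.1.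
Proof. by rewrite linearB projM_N fixed_valP subr0. Qed.

Lemma to_from_dsum : cancel from_dsum to_dsum.
Proof.
case=> x y; congr pair; apply: val_inj; first exact (projM_from_dsum (x, y)).
rewrite /= !linearB MBi_fixed BiN !linearN sub0r opprK; exact (fixed_valP y).
Qed.

Lemma from_to_dsum : cancel to_dsum from_dsum.
Proof. by move=> h; rewrite /from_dsum /projM /= -BE BK. Qed.

Lemma to_dsum_B p : to_dsum (B (from_dsum p)) = dsum_neg restrB p.
Proof.
case: p => x y; congr pair; apply: val_inj.
  change (projM (B (from_dsum (x, y))) = B (fixed_val x)).
  by rewrite projM_B projM_from_dsum.
by rewrite /= BiK linearB M_fixed MN_fixed sub0r.
Qed.

Lemma square_zero_commutator_similar_dsum_neg : similar_dsum_neg ipH B.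
Proof.
have ipK_P := fixed_ip_inner_product projM ipH_P.
have ipKK_P := ip_sum_inner_product ipK_P.
have val_bd := bounded_op_fixed_val projM ipH_P.
have restr_bd T (ET : forall x : K, projM (T (fixed_val x)) = T (fixed_val x)) :
    bounded_op ipH ipH T -> bounded_op ipK ipK (fixed_corestrict ET).
  move=> T_bd; apply: (bounded_op_fixed_corestrict ipH_P ET ipK_P).
  exact (bounded_op_comp ipK_P ipH_P ipH_P val_bd T_bd).
exists K, ipK, restrB; split.
- by split; last exact: fixed_ip_complete H_Hilbert.2 bounded_op_projM projM_id.
- exists restrBi; split; [exact: restr_bd | exact: restr_bd | |].
  + by move=> x; apply: val_inj; rewrite /= BiK.
  + by move=> x; apply: val_inj; rewrite /= BK.
exists from_dsum, to_dsum; split; last exact: to_dsum_B.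
split; [| | exact: to_from_dsum | exact: from_to_dsum].
- have fst_bd := bounded_op_comp ipKK_P ipK_P ipH_P (bounded_op_fst ipK_P) val_bd.
  have snd_bd := bounded_op_comp ipKK_P ipK_P ipH_P (bounded_op_snd ipK_P) val_bd.
  have Nsnd_bd := bounded_op_comp ipKK_P ipH_P ipH_P snd_bd N_bd.
  exact (bounded_op_sub ipKK_P ipH_P fst_bd Nsnd_bd).
- have MBi_bd := bounded_op_comp ipH_P ipH_P ipH_P Bi_bd M_bd.
  exact (bounded_op_pair ipH_P ipK_P
    (bounded_op_fixed_corestrict ipH_P projM_id ipH_P bounded_op_projM)
    (bounded_op_fixed_corestrict ipH_P (fun y => projM_M (Bi y)) ipH_P MBi_bd)).
Qed.

End SquareZeroCommutatorDecomposition.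

Theorem proposition2p03 (R : realType) (H : lmodType R[i]) (ipH : H -> H -> R[i])
  (hH : is_Hilbert ipH) (B : H -> H) (hB : invertible_op ipH ipH B) :
  (exists M N : H -> H,
      [/\ bounded_op ipH ipH M, bounded_op ipH ipH N,
          (forall x, M (M x) = 0), (forall x, N (N x) = 0)
        & forall x, B x = M (N x) - N (M x)])
  <->
  (exists (K : lmodType R[i]) (ipK : K -> K -> R[i]) (A0 : K -> K),
      [/\ is_Hilbert ipK, invertible_op ipK ipK A0
        & exists (S : (K * K)%type -> H) (Si : H -> (K * K)%type),
            bounded_inverse (ip_sum ipK) ipH S Si /\
            forall p, Si (B (S p)) = dsum_neg A0 p]).
Proof.
change (square_zero_commutator ipH B <-> similar_dsum_neg ipH B).
split.
- case=> M [N [M_bd N_bd MM NN BE]]; case: hB => Bi [B_bd Bi_bd BiK BK].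
  exact: (@square_zero_commutator_similar_dsum_neg _ _ _
    (bounded_linear M_bd) (bounded_linear N_bd)
    (bounded_linear B_bd) (bounded_linear Bi_bd)
    hH M_bd N_bd B_bd Bi_bd BiK BK MM NN BE).
case=> K [ipK [A0 [[ipK_P _] [_ [A0_bd _ _ _]] [S [Si [[S_bd Si_bd SiK SK] SiBS]]]]]].
have S_inv :
    bounded_inverse (ip_sum ipK) ipH (bounded_linear S_bd) (bounded_linear Si_bd).
  by split.
apply: square_zero_commutator_similar hH.1 (ip_sum_inner_product ipK_P) S_inv SiBS _.
exact: dsum_neg_square_zero_commutator (bounded_linear A0_bd) ipK_P A0_bd.
Qed.
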